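(* Let $n\ge 2$ be an integer. Then there is a one-to-one correspondence (bijection) between the set $\Sigma_{n^2}$ of all $n^2\times n^2$ S-permutation matrices and the set $\Pi_n$.
   Context: A binary matrix is a matrix with all entries in $\{0,1\}$. For $[n]=\{1,\dots,n\}$, an $n^2\times n^2$ binary matrix $A$ is partitioned by $n-1$ horizontal and $n-1$ vertical lines into $n^2$ non-intersecting $n\times n$ submatrices (blocks) $A_{kl}$, $1\le k,l\le n$, so that $A=[A_{kl}]_{k,l=1}^n$. $A$ is an S-permutation matrix if each row, each column and each block of $A$ contains exactly one entry equal to $1$; $\Sigma_{n^2}$ denotes the set of all $n^2\times n^2$ S-permutation matrices. $\Pi_n$ is the set of all $n\times n$ matrices $\pi$ whose entries are ordered pairs $\langle i,j\rangle$ with $1\le i,j\le n$, such that: for every row $[\langle a_1,b_1\rangle,\dots,\langle a_n,b_n\rangle]$ of $\pi$, the sequence $a_1,\dots,a_n$ is a permutation of $[n]$; and for every column $(\langle a_1,b_1\rangle,\dots,\langle a_n,b_n\rangle)^T$ of $\pi$, the sequence $b_1,\dots,b_n$ is a permutation of $[n]$. *)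

From mathcomp Require Import all_boot all_order all_algebra.
Set Implicit Arguments. Unset Strict Implicit. Unset Printing Implicit Defensive.

(* Indices are 0-based: rows/columns of an n^2 x n^2 matrix are 'I_(n*n).
   Row i (0-based) lies in block-row i %/ n, column j in block-column j %/ n,
   so block A_{kl} (0-based k,l : 'I_n) consists of the entries (i,j) with
   i %/ n = k and j %/ n = l. *)

Definition is_Sperm (n : nat) (A : 'M[bool]_(n * n)) : bool :=
  [&& [forall i : 'I_(n * n), #|[set j : 'I_(n * n) | A i j]| == 1],
      [forall j : 'I_(n * n), #|[set i : 'I_(n * n) | A i j]| == 1] &
      [forall k : 'I_n, forall l : 'I_n,
         #|[set ij : 'I_(n * n) * 'I_(n * n) |
              [&& ij.1 %/ n == k, ij.2 %/ n == l & A ij.1 ij.2]]| == 1]].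

Definition Sigma (n : nat) := {A : 'M[bool]_(n * n) | is_Sperm A}.

Definition is_Pi (n : nat) (p : 'M['I_n * 'I_n]_n) : bool :=
  [forall i : 'I_n, perm_eq [seq (p i j).1 | j <- enum 'I_n] (enum 'I_n)] &&
  [forall j : 'I_n, perm_eq [seq (p i j).2 | i <- enum 'I_n] (enum 'I_n)].

Definition Pi (n : nat) := {p : 'M['I_n * 'I_n]_n | is_Pi p}.

From mathcomp Require Import all_boot all_order all_algebra.

(* Write a row index of an n^2 x n^2 matrix as i = k n + a with k, a < n: k
   picks the block-row and a the row inside it.  Every block (k, l) of an
   S-permutation matrix A holds exactly one 1, at row k n + a and column
   l n + b, and the matrix pi with pi_{kl} = <a, b> determines A.  A second 1
   in row k n + a would come from another block (k, l') with the same a, so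
   the row condition on A says exactly that the first components along row k
   of pi are distinct; dually for columns and second components. *)

Set Implicit Arguments.
Unset Strict Implicit.
Unset Printing Implicit Defensive.

Lemma perm_map_enumP (T : finType) (f : T -> T) :
  reflect (injective f) (perm_eq [seq f x | x <- enum T] (enum T)).
Proof.
apply: (iffP idP) => [/perm_uniq uniq_fT | f_inj].
  by apply/injectiveP; rewrite /injectiveb /dinjectiveb uniq_fT enum_uniq.
have [g fK gK] := injF_bij f_inj.
apply: uniq_perm => [|| x]; first by rewrite map_inj_uniq ?enum_uniq.
  exact: enum_uniq.
by rewrite mem_enum -(gK x) map_f ?mem_enum.
Qed.

Section SPermutationMatrices.
Variable n : nat.

Lemma blk_subproof (i : 'I_(n * n)) : i %/ n < n.
Proof. by case: n i => [[] //|m i]; rewrite ltn_divLR. Qed.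

Lemma off_subproof (i : 'I_(n * n)) : i %% n < n.
Proof. by case: n i => [[] //|m i]; rewrite ltn_pmod. Qed.

Lemma idx_subproof (k a : 'I_n) : k * n + a < n * n.
Proof.
by apply: leq_trans (leq_mul (ltn_ord k) (leqnn n)); rewrite mulSn addnC ltn_add2r.
Qed.

Definition blk (i : 'I_(n * n)) : 'I_n := Ordinal (blk_subproof i).
Definition off (i : 'I_(n * n)) : 'I_n := Ordinal (off_subproof i).
Definition idx (k a : 'I_n) : 'I_(n * n) := Ordinal (idx_subproof k a).

Lemma blk_idx k a : blk (idx k a) = k.
Proof.
have n_gt0 : 0 < n by apply: leq_ltn_trans (ltn_ord k).
by apply: val_inj; rewrite /= divnMDl // divn_small ?addn0.
Qed.

Lemma off_idx k a : off (idx k a) = a.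
Proof. by apply: val_inj; rewrite /= modnMDl modn_small. Qed.

Lemma idx_blk_off i : idx (blk i) (off i) = i.
Proof. by apply: val_inj; rewrite /= -divn_eq. Qed.

Lemma blk_eqE (i : 'I_(n * n)) (k : 'I_n) : (i %/ n == k) = (blk i == k).
Proof. by []. Qed.

Definition block_ones (A : 'M[bool]_(n * n)) (k l : 'I_n) :=
  [set ab : 'I_n * 'I_n | A (idx k ab.1) (idx l ab.2)].

Lemma card_block (A : 'M[bool]_(n * n)) (k l : 'I_n) :
  #|[set ij : 'I_(n * n) * 'I_(n * n) |
       [&& ij.1 %/ n == k, ij.2 %/ n == l & A ij.1 ij.2]]|
  = #|block_ones A k l|.
Proof.
pose h (ab : 'I_n * 'I_n) := (idx k ab.1, idx l ab.2).
have h_inj : injective h.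
  by move=> [a b] [a' b'] /(congr1 (fun ij => (off ij.1, off ij.2))); rewrite /= !off_idx.
rewrite -(card_imset _ h_inj); apply: eq_card => -[i j]; rewrite inE /= !blk_eqE.
apply/and3P/imsetP => [[/eqP ki /eqP lj Aij] | [[a b] Aab [-> ->]]].
  by exists (off i, off j); rewrite /block_ones /h ?inE /= -ki -lj !idx_blk_off.
by rewrite inE in Aab; rewrite !blk_idx !eqxx.
Qed.

Definition entry_of (A : 'M[bool]_(n * n)) (k l : 'I_n) : 'I_n * 'I_n :=
  odflt (k, l) [pick ab in block_ones A k l].

Lemma entry_of_set1 A k l ab :
  block_ones A k l = [set ab] -> entry_of A k l = ab.
Proof.
rewrite /entry_of => ->; case: pickP => [x | /(_ ab)]; rewrite in_set1 ?eqxx //.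
by move/eqP.
Qed.

Definition Pi_of_Sperm (A : 'M[bool]_(n * n)) : 'M['I_n * 'I_n]_n :=
  \matrix_(k, l) entry_of A k l.

Definition Sperm_of_Pi (p : 'M['I_n * 'I_n]_n) : 'M[bool]_(n * n) :=
  \matrix_(i, j) (p (blk i) (blk j) == (off i, off j)).

Section FromSperm.
Variable A : 'M[bool]_(n * n).
Hypothesis A_Sperm : is_Sperm A.

Lemma block_onesE k l : block_ones A k l = [set entry_of A k l].
Proof.
case/and3P: A_Sperm => _ _ /forallP /(_ k) /forallP /(_ l).
rewrite card_block => /cards1P [ab Eab].
by rewrite Eab (entry_of_set1 Eab).
Qed.

Lemma entry_ofP k l : A (idx k (entry_of A k l).1) (idx l (entry_of A k l).2).
Proof. by have := set11 (entry_of A k l); rewrite -block_onesE inE. Qed.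

Lemma Sperm_row_uniq i j j' : A i j -> A i j' -> j = j'.
Proof.
case/and3P: A_Sperm => /forallP /(_ i) /eqP row1 _ _ Aij Aij'.
have /card_le1_eqP row_uniq : #|[set j | A i j]| <= 1 by rewrite row1.
by apply: row_uniq; rewrite inE.
Qed.

Lemma Sperm_col_uniq i i' j : A i j -> A i' j -> i = i'.
Proof.
case/and3P: A_Sperm => _ /forallP /(_ j) /eqP col1 _ Aij Ai'j.
have /card_le1_eqP col_uniq : #|[set i | A i j]| <= 1 by rewrite col1.
by apply: col_uniq; rewrite inE.
Qed.

Lemma is_Pi_of_Sperm : is_Pi (Pi_of_Sperm A).
Proof.
apply/andP; split; apply/forallP => m; apply/perm_map_enumP => x y; rewrite !mxE => E.
  move: (entry_ofP m x); rewrite E => /Sperm_row_uniq/(_ (entry_ofP m y)).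
  by move/(congr1 blk); rewrite !blk_idx.
move: (entry_ofP x m); rewrite E => /Sperm_col_uniq/(_ (entry_ofP y m)).
by move/(congr1 blk); rewrite !blk_idx.
Qed.

Lemma Pi_of_SpermK : Sperm_of_Pi (Pi_of_Sperm A) = A.
Proof.
apply/matrixP => i j; rewrite !mxE eq_sym -in_set1 -block_onesE inE.
by rewrite !idx_blk_off.
Qed.

End FromSperm.

Lemma block_ones_Sperm_of_Pi p k l : block_ones (Sperm_of_Pi p) k l = [set p k l].
Proof.
by apply/setP => -[a b]; rewrite !inE mxE !blk_idx !off_idx eq_sym.
Qed.

Lemma Sperm_of_PiK p : Pi_of_Sperm (Sperm_of_Pi p) = p.
Proof.
by apply/matrixP => k l; rewrite mxE (entry_of_set1 (block_ones_Sperm_of_Pi _ _ _)).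
Qed.

Lemma card_line_of_graph (f g : 'I_n -> 'I_n) a :
  injective f -> #|[set i | (f (blk i) == a) && (g (blk i) == off i)]| == 1.
Proof.
move=> /injF_bij [f' fK f'K]; apply/cards1P; exists (idx (f' a) (g (f' a))).
apply/setP => i; rewrite !inE; apply/andP/eqP => [[/eqP fi /eqP gi] | ->].
  by rewrite -[i]idx_blk_off -gi -fi fK.
by rewrite blk_idx off_idx f'K.
Qed.

Lemma is_Sperm_of_Pi p : is_Pi p -> is_Sperm (Sperm_of_Pi p).
Proof.
case/andP => /forallP rowP /forallP colP; apply/and3P; split.
- apply/forallP => i; have rowi := perm_map_enumP _ (rowP (blk i)).
  under eq_finset => j do rewrite mxE [p _ _]surjective_pairing xpair_eqE.
  exact: card_line_of_graph (fun l => (p (blk i) l).2) _ rowi.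
- apply/forallP => j; have colj := perm_map_enumP _ (colP (blk j)).
  under eq_finset => i do rewrite mxE [p _ _]surjective_pairing xpair_eqE andbC.
  exact: card_line_of_graph (fun k => (p k (blk j)).1) _ colj.
- by apply/forallP => k; apply/forallP => l; rewrite card_block block_ones_Sperm_of_Pi cards1.
Qed.

End SPermutationMatrices.

(* The bijection exists for every n. *)
Theorem mainTheorem1 (n : nat) (hn : 2 <= n) :
  exists f : Sigma n -> Pi n, bijective f.
Proof.
pose F (A : Sigma n) : Pi n := exist _ (Pi_of_Sperm (val A)) (is_Pi_of_Sperm (valP A)).
pose G (p : Pi n) : Sigma n := exist _ (Sperm_of_Pi (val p)) (is_Sperm_of_Pi (valP p)).
exists F, G => [A | p]; apply: val_inj.
  exact: Pi_of_SpermK (valP A).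
exact: Sperm_of_PiK.
Qed.
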